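(* Let $\mathbf X_1,\dots,\mathbf X_n$ be i.i.d. copies of $\mathbf X\in\mathbb R^d$ with $K_{\mathbf X}=\sup_j\|X_j\|_{\psi_2}<\infty$, $\boldsymbol\Sigma_{\mathbf X}=\mathbb E\mathbf X\mathbf X^T$, $\boldsymbol\Sigma_n=n^{-1}\sum_i\mathbf X_i\mathbf X_i^T$, and let $\bar c$ be the universal constant for which $\mathbb P(\|\boldsymbol\Sigma_n-\boldsymbol\Sigma_{\mathbf X}\|_{\max}>4A_XK_{\mathbf X}^2\sqrt{\log d/n})\le2d^{2-\bar cA_X^2}$ for every constant $A_X>0$ with $A_X\sqrt{\log d/n}\le1$. Fix such an $A_X$ and $0<\kappa<1$. Assume $\lambda_{\min}(\boldsymbol\Sigma_{\mathbf X})>\delta>0$, $s_{\mathbf v}\sqrt{\log d/n}\le(1-\kappa)\frac{\lambda_{\min}(\boldsymbol\Sigma_{\mathbf X})}{(1+1)^2\,4A_XK_{\mathbf X}^2}$ and $\lambda'\ge\|\mathbf v^*\|_14A_XK_{\mathbf X}^2\sqrt{\log d/n}$. Then with probability at least $1-2d^{2-\bar cA_X^2}$, $\|\hat{\mathbf v}-\mathbf v^*\|_1\le\frac{8\lambda's_{\mathbf v}}{\mathrm{RE}_\kappa(s_{\mathbf v},1)}$; additionally $\|\hat{\mathbf v}_{S_{\mathbf v}^c}-\mathbf v^*_{S_{\mathbf v}^c}\|_1\le\|\hat{\mathbf v}_{S_{\mathbf v}}-\mathbf v^*_{S_{\mathbf v}}\|_1$.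
   Context: $\mathbf v^*=\boldsymbol\Sigma_{\mathbf X}^{-1}\mathbf e_1^T$, $S_{\mathbf v}=\mathrm{supp}(\mathbf v^* )$, $s_{\mathbf v}=|S_{\mathbf v}|$. $\hat{\mathbf v}=\arg\min\|\mathbf v\|_1$ subject to $\|\mathbf v^T\boldsymbol\Sigma_n-\mathbf e_1\|_\infty\le\lambda'$, with $\mathbf e_1=(1,0,\dots,0)$. For a vector $\mathbf u$ and index set $S$, $\mathbf u_S$ is the subvector on $S$. Restricted eigenvalue: for symmetric positive semidefinite $\mathbf M\in\mathbb R^{d\times d}$, $\mathrm{RE}_{\mathbf M}(s,\xi)=\min_{|S|\le s}\min\{\mathbf u^T\mathbf M\mathbf u/\|\mathbf u_S\|_2^2:\mathbf u\ne0,\|\mathbf u_{S^c}\|_1\le\xi\|\mathbf u_S\|_1\}$, and $\mathrm{RE}_\kappa(s,\xi)=\kappa\,\mathrm{RE}_{\boldsymbol\Sigma_{\mathbf X}}(s,\xi)$. $\|X\|_{\psi_2}=\sup_{p\ge1}p^{-1/2}(\mathbb E|X|^p)^{1/p}$. *)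

From HB Require Import structures.
From mathcomp Require Import all_boot all_order all_algebra.
From mathcomp Require Import all_classical all_reals all_analysis.
Set Implicit Arguments.
Unset Strict Implicit.
Unset Printing Implicit Defensive.
Import Order.TTheory GRing.Theory Num.Theory.
Import numFieldNormedType.Exports.
Local Open Scope classical_set_scope.
Local Open Scope ring_scope.

Section LinAlg.
Context {R : realType}.

Definition l1norm {d} (v : 'cV[R]_d) : R := \sum_i `|v i 0|.
Definition l1norm_on {d} (S : {set 'I_d}) (v : 'cV[R]_d) : R :=
  \sum_(i in S) `|v i 0|.
Definition l2sq_on {d} (S : {set 'I_d}) (v : 'cV[R]_d) : R :=
  \sum_(i in S) (v i 0) ^+ 2.
Definition maxnorm {m k} (A : 'M[R]_(m, k)) : R :=
  \big[Num.max/0]_i \big[Num.max/0]_j `|A i j|.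
Definition supnorm_row {d} (v : 'rV[R]_d) : R := \big[Num.max/0]_j `|v 0 j|.
Definition e1 d : 'rV[R]_d := \row_j (nat_of_ord j == 0%N)%:R.
Definition lambda_min {d} (M : 'M[R]_d) : R := inf [set a : R | eigenvalue M a].
Definition supp {d} (v : 'cV[R]_d) : {set 'I_d} := [set i | v i 0 != 0].
Definition vstar {d} (Sigma : 'M[R]_d) : 'cV[R]_d := invmx Sigma *m (e1 d)^T.

(* restricted eigenvalue RE_M(s, xi) (the min is attained; written as inf) *)
Definition RE {d} (M : 'M[R]_d) (s : nat) (xi : R) : R :=
  inf [set r : R | exists (S : {set 'I_d}) (u : 'cV[R]_d),
        [/\ (#|S| <= s)%N, u != 0, l1norm_on (~: S) u <= xi * l1norm_on S u
          & r = (u^T *m M *m u) 0 0 / l2sq_on S u]].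
Definition RE_kappa {d} (kappa : R) (Sigma : 'M[R]_d) (s : nat) (xi : R) : R :=
  kappa * RE Sigma s xi.

Definition feasible {d} (Sn : 'M[R]_d) (lam : R) (v : 'cV[R]_d) : Prop :=
  supnorm_row (v^T *m Sn - e1 d) <= lam.
Definition is_minimizer {d} (Sn : 'M[R]_d) (lam : R) (v : 'cV[R]_d) : Prop :=
  feasible Sn lam v /\ forall u, feasible Sn lam u -> l1norm v <= l1norm u.

End LinAlg.

Section Prob.
Context {R : realType} {dT : measure_display} {T : measurableType dT}.
Variable P : probability T R.

Definition psi2norm (Y : T -> R) : \bar R :=
  ereal_sup [set ((powR p (- 2^-1))%:E *
                 poweR (\int[P]_w ((powR `|Y w| p)%:E)) p^-1)%E
            | p in [set p : R | 1 <= p]].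

Definition Kx {d} (X : T -> 'cV[R]_d) : \bar R :=
  ereal_sup (range (fun j : 'I_d => psi2norm (fun w => X w j 0))).

Definition Sigma_X {d} (X : T -> 'cV[R]_d) : 'M[R]_d :=
  \matrix_(j, k) fine (\int[P]_w ((X w j 0 * X w k 0)%:E)).

Definition Sigma_n {n d} (Xs : 'I_n -> T -> 'cV[R]_d) (w : T) : 'M[R]_d :=
  n%:R^-1 *: \sum_i (Xs i w *m (Xs i w)^T).

(* X_1..X_n are i.i.d. copies of X: measurable coordinates, same law as X and
   mutually independent (laws/independence tested on measurable boxes, which
   form a pi-system generating the Borel sigma-algebra of R^d). *)
Definition iid_copies {n d} (Xs : 'I_n -> T -> 'cV[R]_d) (X : T -> 'cV[R]_d) : Prop :=
  [/\ (forall i j, measurable_fun setT (fun w => Xs i w j 0)),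
      (forall B : 'I_d -> set R, (forall j, measurable (B j)) -> forall i,
         P [set w | forall j, B j (Xs i w j 0)] = P [set w | forall j, B j (X w j 0)])
    & (forall B : 'I_n -> 'I_d -> set R, (forall i j, measurable (B i j)) ->
         P [set w | forall i j, B i j (Xs i w j 0)]
         = (\prod_i P [set w | forall j, B i j (Xs i w j ord0)])%E)].

End Prob.

From HB Require Import structures.
From mathcomp Require Import all_boot all_order all_algebra.
From mathcomp Require Import all_classical all_reals all_analysis.
From mathcomp Require Import measurable_realfun ring lra.
Import Order.TTheory GRing.Theory Num.Theory.
Import numFieldNormedType.Exports.
Local Open Scope classical_set_scope.
Local Open Scope ring_scope.
Set Implicit Arguments.
Unset Strict Implicit.
Unset Printing Implicit Defensive.

(* On the event |Sigma_n - Sigma_X|_max <= t := 4 A K^2 sqrt(log d / n), whose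
   probability is at least 1 - 2 d^(2 - cbar A^2), everything is deterministic.
   Since v*^T Sigma_X = e_1, v* is feasible with slack |v*|_1 t <= lambda', so
   the minimiser satisfies |vhat|_1 <= |v*|_1, which puts h = vhat - v* in the
   cone |h_{S^c}|_1 <= |h_S|_1.  Feasibility of both points gives
   h^T Sigma_n h <= 2 lambda' |h|_1, and the perturbation costs at most
   t |h|_1^2 <= 4 t s |h_S|_2^2.  Against h^T Sigma_X h >= RE |h_S|_2^2 and the
   sparsity condition 4 s t <= (1 - kappa) lambda_min <= (1 - kappa) RE this
   leaves kappa RE |h_S|_2^2 <= 4 lambda' |h_S|_1, and Cauchy-Schwarz
   |h_S|_1^2 <= s |h_S|_2^2 yields |h|_1 <= 2 |h_S|_1 <= 8 lambda' s / (kappa RE).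
   RE >= lambda_min > 0 rests on the Rayleigh bound u^T M u >= lambda_min |u|^2,
   obtained by showing that the infimum of the Rayleigh quotient is an
   eigenvalue. *)

Section QuadraticForms.
Context {R : realType}.
Implicit Types (d : nat) (a b c t : R).

Definition bilin {d} (M : 'M[R]_d) (w v : 'cV[R]_d) : R := (w^T *m M *m v) 0 0.
Definition qform {d} (M : 'M[R]_d) (u : 'cV[R]_d) : R := bilin M u u.
Definition sqnorm {d} (u : 'cV[R]_d) : R := \sum_i (u i 0) ^+ 2.
Definition mx_abs_sum {d} (M : 'M[R]_d) : R := \sum_j \sum_i `|M i j|.

Lemma qformE d (M : 'M[R]_d) u :
  qform M u = \sum_j \sum_i u i 0 * M i j * u j 0.
Proof.
rewrite /qform /bilin mxE; apply: eq_bigr => j _; rewrite mxE big_distrl /=.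
by apply: eq_bigr => i _; rewrite !mxE.
Qed.

Lemma sqnormE d (u : 'cV[R]_d) : (u^T *m u) 0 0 = sqnorm u.
Proof. by rewrite mxE; apply: eq_bigr => i _; rewrite mxE expr2. Qed.

Lemma sqnorm_ge0 d (u : 'cV[R]_d) : 0 <= sqnorm u.
Proof. by apply: sumr_ge0 => i _; exact: sqr_ge0. Qed.

Lemma sqr_le_sqnorm d (u : 'cV[R]_d) i : u i 0 ^+ 2 <= sqnorm u.
Proof. by rewrite /sqnorm (bigD1 i) //= lerDl sumr_ge0 // => j _; apply: sqr_ge0. Qed.

Lemma sqnorm_gt0 d (u : 'cV[R]_d) : u != 0 -> 0 < sqnorm u.
Proof.
move=> u0; have [i ui] : exists i, u i 0 != 0.
  apply/existsP; apply: contraR u0 => /existsPn u0; apply/eqP/matrixP => i j.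
  by rewrite (ord1 j) mxE; apply/eqP; rewrite -[_ == _]negbK u0.
by apply: lt_le_trans (sqr_le_sqnorm u i); rewrite exprn_even_gt0.
Qed.

Lemma sqnormZ d (u : 'cV[R]_d) k : sqnorm (k *: u) = k ^+ 2 * sqnorm u.
Proof. by rewrite /sqnorm mulr_sumr; apply: eq_bigr => i _; rewrite mxE exprMn. Qed.

Lemma qformZ d (M : 'M[R]_d) u k : qform M (k *: u) = k ^+ 2 * qform M u.
Proof.
rewrite /qform /bilin [(k *: u)^T]linearZ -!scalemxAl -scalemxAr scalerA.
by rewrite [LHS]mxE expr2.
Qed.

Lemma qformB d (M N : 'M[R]_d) u : qform (M - N) u = qform M u - qform N u.
Proof. by rewrite /qform /bilin mulmxBr mulmxBl [LHS]mxE [X in _ + X]mxE. Qed.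

Lemma qform_subZ d (M : 'M[R]_d) (v w : 'cV[R]_d) t :
  qform M (v - t *: w)
  = qform M v - t * bilin M w v - t * bilin M v w + t ^+ 2 * qform M w.
Proof.
rewrite /qform /bilin.
have -> : (v - t *: w)^T = v^T - t *: w^T by apply/matrixP => i j; rewrite !mxE.
by rewrite !mulmxBl !mulmxBr -!scalemxAl -!scalemxAr !mxE; ring.
Qed.

Lemma qform_sub_scalar d (M : 'M[R]_d) u c :
  qform (M - c%:M) u = qform M u - c * sqnorm u.
Proof.
by rewrite qformB /qform /bilin mul_mx_scalar -scalemxAl [X in _ - X]mxE sqnormE.
Qed.

Lemma bilinC d (M : 'M[R]_d) v w : M^T = M -> bilin M v w = bilin M w v.
Proof.
move=> sM; rewrite /bilin.
have -> : (w^T *m M *m v) 0 0 = (w^T *m M *m v)^T 0 0 by rewrite [RHS]mxE.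
by rewrite !trmx_mul trmxK sM mulmxA.
Qed.

Lemma mx_abs_sum_ge0 d (M : 'M[R]_d) : 0 <= mx_abs_sum M.
Proof. by apply: sumr_ge0 => j _; apply: sumr_ge0. Qed.

Lemma norm_qform_le d (M : 'M[R]_d) u : `|qform M u| <= mx_abs_sum M * sqnorm u.
Proof.
rewrite qformE /mx_abs_sum mulr_suml; apply: le_trans (ler_norm_sum _ _ _) _.
apply: ler_sum => j _; rewrite mulr_suml.
apply: le_trans (ler_norm_sum _ _ _) _; apply: ler_sum => i _.
have amgm : `|u i 0| * `|u j 0| <= sqnorm u.
  have := sqr_ge0 (`|u i 0| - `|u j 0|).
  rewrite sqrrB !real_normK ?num_real //.
  have := sqr_le_sqnorm u i; have := sqr_le_sqnorm u j; lra.
rewrite !normrM mulrAC mulrC ler_wpM2l //.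
Qed.

Lemma quadratic_discr_le a b c : 0 <= c ->
  (forall t, 0 <= a - 2 * t * b + t ^+ 2 * c) -> b ^+ 2 <= a * c.
Proof.
move=> c0 nonneg; have [cpos|cle0] := ltP 0 c.
  have := mulr_ge0 (ltW cpos) (nonneg (b / c)).
  have -> : c * (a - 2 * (b / c) * b + (b / c) ^+ 2 * c) = a * c - b ^+ 2.
    by field; rewrite gt_eqF.
  by rewrite subr_ge0.
have c_eq0 : c = 0 by apply/eqP; rewrite eq_le cle0 c0.
rewrite c_eq0 mulr0 in nonneg *; have [->|b0] := eqVneq b 0; first by rewrite expr0n.
have := nonneg ((a + 1) / (2 * b)); rewrite mulr0 addr0.
have -> : 2 * ((a + 1) / (2 * b)) * b = a + 1 by field.
lra.
Qed.

Lemma sum_mul_sqr_le (I : finType) (P : pred I) (x y : I -> R) :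
  (\sum_(i | P i) x i * y i) ^+ 2
  <= (\sum_(i | P i) x i ^+ 2) * (\sum_(i | P i) y i ^+ 2).
Proof.
apply: quadratic_discr_le => [|t]; first by apply: sumr_ge0 => i _; apply: sqr_ge0.
rewrite !mulr_sumr -sumrN -!big_split /= sumr_ge0 // => i _.
have -> : x i ^+ 2 - 2 * t * (x i * y i) + t ^+ 2 * y i ^+ 2 = (x i - t * y i) ^+ 2.
  by ring.
exact: sqr_ge0.
Qed.

Lemma bilin_sqr_le d (B : 'M[R]_d) v w : B^T = B -> (forall u, 0 <= qform B u) ->
  bilin B w v ^+ 2 <= qform B w * qform B v.
Proof.
move=> sB psdB; rewrite mulrC; apply: quadratic_discr_le => // t.
have := psdB (v - t *: w); rewrite qform_subZ (bilinC v w sB).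
by congr (0 <= _); ring.
Qed.

(* With y = B u: |u|^2 <= K1 |y|^2, and |y|^2 = u^T B y is controlled by
   Cauchy-Schwarz for the semi-inner product of B. *)
Lemma psd_unitmx_coercive d (B : 'M[R]_d) : B^T = B -> (forall u, 0 <= qform B u) ->
  B \in unitmx -> exists2 C, 0 < C & forall u, sqnorm u <= C * qform B u.
Proof.
move=> sB psdB uB; set K1 := mx_abs_sum ((invmx B)^T *m invmx B).
set K2 := mx_abs_sum B.
have K1ge0 : 0 <= K1 by exact: mx_abs_sum_ge0.
have K2ge0 : 0 <= K2 by exact: mx_abs_sum_ge0.
exists ((1 + K1) * (1 + K2)); first by rewrite mulr_gt0 ?ltr_pwDl.
move=> u; have psd_u := psdB u.
have [y uy yE] : exists2 y, u = invmx B *m y & y = B *m u.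
  by exists (B *m u); rewrite ?mulKmx.
have u_le_y : sqnorm u <= K1 * sqnorm y.
  have -> : sqnorm u = qform ((invmx B)^T *m invmx B) y.
    by rewrite -sqnormE uy trmx_mul /qform /bilin !mulmxA.
  exact: le_trans (ler_norm _) (norm_qform_le _ _).
have y_le_u : sqnorm y <= K2 * qform B u.
  have y_bilin : sqnorm y = bilin B u y by rewrite -sqnormE /bilin {1}yE trmx_mul sB.
  have : sqnorm y * sqnorm y <= (K2 * qform B u) * sqnorm y.
    rewrite -expr2 {1}y_bilin (le_trans (bilin_sqr_le y u sB psdB)) //.
    rewrite [K2 * _]mulrC -mulrA ler_wpM2l //.
    exact: le_trans (ler_norm _) (norm_qform_le B y).
  by have := sqnorm_ge0 y; rewrite le0r => /orP[/eqP->|/ler_pM2r->]; rewrite ?mulr_ge0.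
apply: le_trans u_le_y _; apply: le_trans (ler_wpM2l K1ge0 y_le_u) _.
rewrite mulrA ler_wpM2r // -subr_ge0.
have -> : (1 + K1) * (1 + K2) - K1 * K2 = 1 + K1 + K2 by ring.
by rewrite !addr_ge0.
Qed.

Section Rayleigh.
Variables (d : nat) (M : 'M[R]_d).

Definition rayleigh_inf : R := inf [set qform M u | u in [set u | sqnorm u = 1]].

Lemma has_lbound_rayleigh : has_lbound [set qform M u | u in [set u | sqnorm u = 1]].
Proof.
exists (- mx_abs_sum M) => _ [u /= u1 <-].
by have := norm_qform_le M u; rewrite u1 mulr1 lerNl => /ler_normlP[].
Qed.

Lemma rayleigh_inf_le u : rayleigh_inf * sqnorm u <= qform M u.
Proof.
have [->|u0] := eqVneq u 0.
  by rewrite -(scale0r 0) qformZ sqnormZ expr0n /= !mul0r mulr0.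
have u_gt0 := sqnorm_gt0 u0; set k := (Num.sqrt (sqnorm u))^-1.
have k2 : k ^+ 2 = (sqnorm u)^-1 by rewrite exprVn sqr_sqrtr // ltW.
have : rayleigh_inf <= qform M (k *: u).
  apply: (ge_inf has_lbound_rayleigh); exists (k *: u) => //=.
  by rewrite sqnormZ k2 mulVf ?gt_eqF.
by rewrite qformZ k2 -ler_pdivlMr // mulrC.
Qed.

Lemma rayleigh_inf_le_eigenvalue a : eigenvalue M a -> rayleigh_inf <= a.
Proof.
move=> /eigenvalueP[v vM v0]; have vT0 : v^T != 0 by rewrite trmx_eq0.
have : qform M v^T = a * sqnorm v^T.
  by rewrite /qform /bilin trmxK vM -scalemxAl [LHS]mxE -sqnormE trmxK.
move: (rayleigh_inf_le v^T) => /[swap] ->.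
by rewrite ler_pM2r // sqnorm_gt0.
Qed.

Hypothesis symM : M^T = M.

(* Otherwise M - c%:M is positive semidefinite and invertible, hence coercive
   with some constant C, and c + C^-1 would be a lower bound of the Rayleigh
   quotient exceeding its infimum c. *)
Lemma eigenvalue_rayleigh_inf : (0 < d)%N -> eigenvalue M rayleigh_inf.
Proof.
move=> d_gt0; apply: contraT => not_eigen; set c := rayleigh_inf.
set B := M - c%:M.
have symB : B^T = B by rewrite /B linearB /= tr_scalar_mx symM.
have psdB u : 0 <= qform B u by rewrite qform_sub_scalar subr_ge0 rayleigh_inf_le.
have unitB : B \in unitmx.
  by rewrite -row_free_unit -kermx_eq0; move: not_eigen; rewrite negbK.
have [C C_gt0 coerc] := psd_unitmx_coercive symB psdB unitB.
have : c + C^-1 <= c.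
  apply: lb_le_inf.
    pose e : 'cV[R]_d := \col_i (i == Ordinal d_gt0)%:R.
    exists (qform M e), e => //=; rewrite /sqnorm (bigD1 (Ordinal d_gt0)) //= big1.
      by rewrite mxE eqxx expr1n addr0.
    by move=> i /negbTE ni; rewrite mxE ni expr0n.
  move=> _ [u /= u1 <-]; have := coerc u.
  by rewrite qform_sub_scalar u1 mulr1 -ler_pdivrMl // mulr1 lerBrDl addrC.
by rewrite gerDl leNgt invr_gt0 C_gt0.
Qed.

Lemma lambda_min_qform u : (0 < d)%N -> lambda_min M * sqnorm u <= qform M u.
Proof.
move=> d_gt0; apply: le_trans (rayleigh_inf_le u).
rewrite ler_wpM2r ?sqnorm_ge0 // /lambda_min; apply: ge_inf.
  by exists rayleigh_inf => a; exact: rayleigh_inf_le_eigenvalue.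
exact: eigenvalue_rayleigh_inf.
Qed.

Lemma unitmx_lambda_min_gt0 : (0 < d)%N -> 0 < lambda_min M -> M \in unitmx.
Proof.
move=> d_gt0 lm_gt0; apply: contraT => not_unit.
have /eigenvalueP[v vM v0] : eigenvalue M 0.
  by rewrite /eigenvalue /eigenspace raddf0 subr0 kermx_eq0 row_free_unit.
have vT0 : v^T != 0 by rewrite trmx_eq0.
have := lambda_min_qform v^T d_gt0.
rewrite /qform /bilin trmxK vM scale0r mul0mx mxE.
by rewrite leNgt mulr_gt0 // sqnorm_gt0.
Qed.

End Rayleigh.
End QuadraticForms.

Section SparseVectors.
Context {R : realType} {d : nat}.
Implicit Types (S : {set 'I_d}) (u v : 'cV[R]_d).

Lemma l1norm_ge0 u : 0 <= l1norm u.
Proof. exact: sumr_ge0. Qed.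

Lemma l1norm_on_ge0 S u : 0 <= l1norm_on S u.
Proof. exact: sumr_ge0. Qed.

Lemma l1norm_split S u : l1norm u = l1norm_on S u + l1norm_on (~: S) u.
Proof.
rewrite /l1norm /l1norm_on (bigID (mem S)) /=; congr (_ + _).
by apply: eq_bigl => i; rewrite !inE.
Qed.

Lemma l2sq_on_le_sqnorm S u : l2sq_on S u <= sqnorm u.
Proof.
by rewrite /sqnorm (bigID (mem S)) /= lerDl sumr_ge0 // => i _; apply: sqr_ge0.
Qed.

Lemma l2sq_on_gt0 S u xi : u != 0 ->
  l1norm_on (~: S) u <= xi * l1norm_on S u -> 0 < l2sq_on S u.
Proof.
move=> u0 cone; rewrite lt_def sumr_ge0 ?andbT => [|i _]; last exact: sqr_ge0.
apply: contra u0 => /eqP l2_0.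
have uS i : i \in S -> u i 0 = 0.
  by move=> iS; apply/eqP; rewrite -sqrf_eq0 (psumr_eq0P _ l2_0) // => j _; apply: sqr_ge0.
have l1_0 : l1norm_on (~: S) u = 0.
  apply/eqP; rewrite eq_le l1norm_on_ge0 andbT (le_trans cone) //.
  rewrite (_ : l1norm_on S u = 0) ?mulr0 //.
  by apply: big1 => i iS; rewrite uS ?normr0.
apply/eqP/matrixP => i j; rewrite (ord1 j) mxE.
have [/uS //|iS] := boolP (i \in S).
by apply/eqP; rewrite -normr_eq0 (psumr_eq0P _ l1_0) ?inE.
Qed.

Lemma l1norm_on_sqr_le S u : l1norm_on S u ^+ 2 <= #|S|%:R * l2sq_on S u.
Proof.
have -> : l1norm_on S u = \sum_(i in S) `|u i 0| * 1.
  by apply: eq_bigr => i _; rewrite mulr1.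
have -> : l2sq_on S u = \sum_(i in S) `|u i 0| ^+ 2.
  by apply: eq_bigr => i _; rewrite real_normK ?num_real.
have -> : #|S|%:R = \sum_(i in S) (1 : R) ^+ 2.
  by rewrite (eq_bigr (fun=> 1)) ?sumr_const // => i _; rewrite expr1n.
by rewrite mulrC sum_mul_sqr_le.
Qed.

Lemma entry_le_maxnorm m n (A : 'M[R]_(m, n)) i j : `|A i j| <= maxnorm A.
Proof.
apply: le_trans (le_bigmax _ (fun i => \big[Num.max/0]_j `|A i j|) i).
exact: (le_bigmax _ (fun j => `|A i j|)).
Qed.

Lemma entry_le_supnorm_row (w : 'rV[R]_d) j : `|w 0 j| <= supnorm_row w.
Proof. exact: (le_bigmax _ (fun j => `|w 0 j|)). Qed.

Lemma norm_mulmx_le u (A : 'M[R]_d) j : `|(u^T *m A) 0 j| <= l1norm u * maxnorm A.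
Proof.
rewrite mxE /l1norm mulr_suml; apply: le_trans (ler_norm_sum _ _ _) _.
by apply: ler_sum => i _; rewrite mxE normrM ler_wpM2l ?entry_le_maxnorm.
Qed.

Lemma qform_le_maxnorm (D : 'M[R]_d) u : `|qform D u| <= maxnorm D * l1norm u ^+ 2.
Proof.
rewrite qformE expr2 /l1norm mulr_suml mulr_sumr.
apply: le_trans (ler_norm_sum _ _ _) _; apply: ler_sum => j _.
rewrite !mulr_sumr; apply: le_trans (ler_norm_sum _ _ _) _; apply: ler_sum => i _.
rewrite !normrM mulrAC mulrC [`|u j 0| * _]mulrC.
by apply: ler_wpM2r; [exact: mulr_ge0 | exact: entry_le_maxnorm].
Qed.

End SparseVectors.

Section RestrictedEigenvalue.
Context {R : realType} {d : nat}.
Variables (M : 'M[R]_d) (s : nat) (xi : R).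

Definition RE_ratios : set R :=
  [set r : R | exists (S : {set 'I_d}) (u : 'cV[R]_d),
        [/\ (#|S| <= s)%N, u != 0, l1norm_on (~: S) u <= xi * l1norm_on S u
          & r = (u^T *m M *m u) 0 0 / l2sq_on S u]].

Lemma lbound_RE_ratios lm : 0 <= lm -> (forall u, lm * sqnorm u <= qform M u) ->
  lbound RE_ratios lm.
Proof.
move=> lm_ge0 lm_le _ [S [u [_ u0 cone ->]]].
rewrite ler_pdivlMr ?(l2sq_on_gt0 u0 cone) // (le_trans _ (lm_le u)) //.
by rewrite ler_wpM2l ?l2sq_on_le_sqnorm.
Qed.

Lemma RE_ge0 lm : 0 <= lm -> lbound RE_ratios lm -> 0 <= RE M s xi.
Proof.
move=> lm_ge0 lm_lb; rewrite /RE -/RE_ratios.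
have [->|/set0P ne] := eqVneq RE_ratios set0; first by rewrite inf0.
exact: le_trans lm_ge0 (lb_le_inf ne lm_lb).
Qed.

Section Member.
Variables (lm : R) (S : {set 'I_d}) (u : 'cV[R]_d).
Hypotheses (lm_lb : lbound RE_ratios lm) (card_S : (#|S| <= s)%N) (u0 : u != 0).
Hypothesis cone : l1norm_on (~: S) u <= xi * l1norm_on S u.

Lemma lbound_le_RE : lm <= RE M s xi.
Proof. by apply: lb_le_inf => //; exists (qform M u / l2sq_on S u), S, u. Qed.

Lemma RE_mul_l2sq_le : RE M s xi * l2sq_on S u <= qform M u.
Proof.
rewrite -ler_pdivlMr ?(l2sq_on_gt0 u0 cone) //.
by apply: (ge_inf (ex_intro _ lm lm_lb)); exists S, u.
Qed.

End Member.
End RestrictedEigenvalue.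

Section DantzigSelector.
Context {R : realType} {d : nat}.
Variables (Sn : 'M[R]_d) (lam : R).

Lemma feasible_maxnorm_le (Sig : 'M[R]_d) (v : 'cV[R]_d) t : 0 <= t ->
  v^T *m Sig = e1 d -> maxnorm (Sn - Sig) <= t -> l1norm v * t <= lam ->
  feasible Sn lam v.
Proof.
move=> t_ge0 vSig D_le vt_le; rewrite /feasible.
have -> : v^T *m Sn - e1 d = v^T *m (Sn - Sig) by rewrite mulmxBr vSig.
apply: bigmax_le => [|j _]; first by rewrite (le_trans _ vt_le) ?mulr_ge0 ?l1norm_ge0.
by rewrite (le_trans (norm_mulmx_le _ _ _)) // (le_trans _ vt_le) // ler_wpM2l ?l1norm_ge0.
Qed.

Lemma feasible_qform_sub_le (v w : 'cV[R]_d) : feasible Sn lam v -> feasible Sn lam w ->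
  qform Sn (v - w) <= 2 * lam * l1norm (v - w).
Proof.
move=> feas_v feas_w; set h := v - w.
have grad_le j : `|(h^T *m Sn) 0 j| <= 2 * lam.
  have -> : h^T *m Sn = (v^T *m Sn - e1 d) - (w^T *m Sn - e1 d).
    by rewrite /h linearB /= mulmxBl opprB addrA subrK.
  rewrite [X in `|X|]mxE [X in _ + X]mxE (le_trans (ler_normB _ _)) //.
  have := le_trans (entry_le_supnorm_row _ j) feas_v.
  have := le_trans (entry_le_supnorm_row _ j) feas_w; lra.
rewrite /qform /bilin mxE /l1norm mulr_sumr; apply: ler_sum => j _.
by rewrite (le_trans (ler_norm _)) // normrM ler_wpM2r.
Qed.

Lemma l1norm_on_compl_sub_le (S : {set 'I_d}) (v w : 'cV[R]_d) :
  {in ~: S, forall i, w i 0 = 0} -> l1norm v <= l1norm w ->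
  l1norm_on (~: S) (v - w) <= l1norm_on S (v - w).
Proof.
move=> w_supp vw_le.
have off_v : l1norm_on (~: S) v = l1norm_on (~: S) (v - w).
  by apply: eq_bigr => i iS; rewrite !mxE w_supp // subr0.
have off_w : l1norm_on (~: S) w = 0 by apply: big1 => i iS; rewrite w_supp ?normr0.
have on_w : l1norm_on S w <= l1norm_on S v + l1norm_on S (v - w).
  rewrite /l1norm_on -big_split /=; apply: ler_sum => i _; rewrite !mxE.
  by have := ler_normB (v i 0) (v i 0 - w i 0); rewrite opprB addrCA subrr addr0.
have := l1norm_split S v; have := l1norm_split S w; rewrite off_v off_w; lra.
Qed.

Lemma l1norm_restricted_error_le (Sig : 'M[R]_d) (S : {set 'I_d}) h t kappa r :
  0 < kappa -> 0 <= r -> 0 <= t -> 0 <= lam ->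
  l1norm_on (~: S) h <= l1norm_on S h ->
  r * l2sq_on S h <= qform Sig h ->
  qform Sn h <= 2 * lam * l1norm h ->
  maxnorm (Sn - Sig) <= t ->
  4 * #|S|%:R * t <= (1 - kappa) * r ->
  kappa * r * l1norm h <= 8 * lam * #|S|%:R.
Proof.
set a := l1norm_on S h; set b := l2sq_on S h; set l := l1norm h; set s := #|S|%:R.
move=> kappa_gt0 r_ge0 t_ge0 lam_ge0 cone r_le qSn_le D_le st_le.
have a_ge0 : 0 <= a := l1norm_on_ge0 S h.
have b_ge0 : 0 <= b by apply: sumr_ge0 => i _; apply: sqr_ge0.
have l_ge0 : 0 <= l := l1norm_ge0 h.
have l_le : l <= 2 * a by have := l1norm_split S h; rewrite -/l -/a; lra.
have ab : a ^+ 2 <= s * b := l1norm_on_sqr_le S h.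
have tl_le : t * l ^+ 2 <= 4 * t * (s * b).
  have -> : 4 * t * (s * b) = t * (4 * (s * b)) by ring.
  apply: ler_wpM2l => //; apply: le_trans (_ : l ^+ 2 <= (2 * a) ^+ 2) _.
    by rewrite ler_sqr ?nnegrE ?mulr_ge0.
  by rewrite exprMn; have := ler_wpM2l (ler0n R 4) ab; lra.
have qSig_le : qform Sig h <= 2 * lam * l + t * l ^+ 2.
  have := qform_le_maxnorm (Sn - Sig) h; rewrite qformB -/l => /ler_normlP[+ _].
  have := ler_wpM2r (sqr_ge0 l) D_le; lra.
have rb_le : kappa * r * b <= 4 * lam * a.
  have := ler_wpM2r b_ge0 st_le; have := ler_wpM2l lam_ge0 l_le; lra.
have ra_le : kappa * r * a ^+ 2 <= 4 * lam * s * a.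
  have := ler_wpM2l (mulr_ge0 (ltW kappa_gt0) r_ge0) ab.
  have := ler_wpM2l (ler0n R #|S|) rb_le; rewrite -/s; lra.
have kr_ge0 : 0 <= kappa * r by rewrite mulr_ge0 // ltW.
have krl_le : kappa * r * l <= 2 * (kappa * r * a).
  by have := ler_wpM2l kr_ge0 l_le; lra.
have := a_ge0; rewrite le0r => /orP[/eqP a0|a_gt0].
  by move: krl_le; rewrite a0 mulr0 mulr0; have := mulr_ge0 lam_ge0 (ler0n R #|S|); lra.
have kra_le : kappa * r * a <= 4 * lam * s.
  by rewrite -(ler_pM2r a_gt0); lra.
lra.
Qed.

End DantzigSelector.

Section DantzigError.
Context {R : realType}.

Lemma vstar_trmx_mul d (Sig : 'M[R]_d) : Sig^T = Sig -> Sig \in unitmx ->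
  (vstar Sig)^T *m Sig = e1 d.
Proof. by move=> symS unitS; rewrite /vstar trmx_mul trmxK trmx_inv symS mulmxKV. Qed.

Lemma dantzig_error_bound d (Sig Sn : 'M[R]_d) (lam t kappa : R) (vh : 'cV[R]_d) :
  (0 < d)%N -> Sig^T = Sig -> 0 < lambda_min Sig -> 0 < kappa < 1 -> 0 <= t ->
  maxnorm (Sn - Sig) <= t ->
  4 * #|supp (vstar Sig)|%:R * t <= (1 - kappa) * lambda_min Sig ->
  l1norm (vstar Sig) * t <= lam ->
  ((exists v, feasible Sn lam v) -> is_minimizer Sn lam vh) ->
  l1norm (vh - vstar Sig)
    <= 8 * lam * #|supp (vstar Sig)|%:R / RE_kappa kappa Sig #|supp (vstar Sig)| 1
  /\ l1norm_on (~: supp (vstar Sig)) (vh - vstar Sig)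
     <= l1norm_on (supp (vstar Sig)) (vh - vstar Sig).
Proof.
move=> d_gt0 symS lm_gt0 /andP[kappa_gt0 kappa_lt1] t_ge0 D_le st_le vs_le min_vh.
set vs := vstar Sig in st_le vs_le *; set S := supp vs in st_le *.
have PD u : lambda_min Sig * sqnorm u <= qform Sig u := lambda_min_qform symS u d_gt0.
have vsSig := vstar_trmx_mul symS (unitmx_lambda_min_gt0 symS d_gt0 lm_gt0).
have lam_ge0 : 0 <= lam by rewrite (le_trans _ vs_le) ?mulr_ge0 ?l1norm_ge0.
have feas_vs := feasible_maxnorm_le t_ge0 vsSig D_le vs_le.
have [feas_vh vh_min] := min_vh (ex_intro _ vs feas_vs).
have vs_supp : {in ~: S, forall i, vs i 0 = 0}.
  by move=> i; rewrite !inE negbK => /eqP.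
have cone := l1norm_on_compl_sub_le vs_supp (vh_min vs feas_vs).
split=> //; set h := vh - vs in cone *.
have lb := lbound_RE_ratios (s := #|S|) (xi := 1) (ltW lm_gt0) PD.
rewrite /RE_kappa; have [h0|h_neq0] := eqVneq h 0.
  rewrite h0 /l1norm big1 => [|i _]; last by rewrite mxE normr0.
  by rewrite divr_ge0 ?mulr_ge0 ?(ltW kappa_gt0) ?(RE_ge0 (ltW lm_gt0) lb).
have cone1 : l1norm_on (~: S) h <= 1 * l1norm_on S h by rewrite mul1r.
have lm_le := lbound_le_RE lb (leqnn _) h_neq0 cone1.
have RE_gt0 := lt_le_trans lm_gt0 lm_le.
rewrite ler_pdivlMr ?mulr_gt0 // mulrC.
apply: (l1norm_restricted_error_le (Sig := Sig) (Sn := Sn) (t := t)) => //.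
- exact: ltW.
- exact: RE_mul_l2sq_le lb (leqnn _) h_neq0 cone1.
- exact: feasible_qform_sub_le.
- by rewrite (le_trans st_le) // ler_wpM2l // subr_ge0 ltW.
Qed.

End DantzigError.

Section Sampling.
Context {R : realType} {dT : measure_display} {T : measurableType dT}.
Variable P : probability T R.

Lemma Sigma_X_sym d (X : T -> 'cV[R]_d) : (Sigma_X P X)^T = Sigma_X P X.
Proof.
apply/matrixP => i j; rewrite !mxE; congr (fine (integral _ _ _)).
by apply/funext => w; rewrite mulrC.
Qed.

Lemma measurable_bigmax (I : Type) (s : seq I) (F : I -> T -> R) :
  (forall i, measurable_fun setT (F i)) ->
  measurable_fun setT (fun w => \big[Num.max/0]_(i <- s) F i w).
Proof.
move=> mF; elim: s => [|i s IH].
  by under eq_fun do rewrite big_nil; exact: measurable_cst.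
by under eq_fun do rewrite big_cons; exact: measurable_maxr.
Qed.

Lemma measurable_maxnorm_Sigma_n n d (Xs : 'I_n -> T -> 'cV[R]_d) (Sig : 'M[R]_d) :
  (forall i j, measurable_fun setT (fun w => Xs i w j 0)) ->
  measurable_fun setT (fun w => maxnorm (Sigma_n Xs w - Sig)).
Proof.
move=> mXs; apply: measurable_bigmax => i; apply: measurable_bigmax => j.
have -> : (fun w => `|(Sigma_n Xs w - Sig) i j|) =
    (fun w => `|n%:R^-1 * (\sum_k Xs k w i 0 * Xs k w j 0) - Sig i j|).
  apply/funext => w; rewrite !mxE summxE; congr (`|_ * _ - _|).
  by apply: eq_bigr => k _; rewrite !mxE big_ord1 !mxE.
apply: measurableT_comp => //; apply: measurable_funB => //.
by apply: measurable_funM => //; apply: measurable_sum => k; apply: measurable_funM.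
Qed.

Lemma probability_setC_ge (B : set T) p : measurable B ->
  (P B <= p%:E)%E -> ((1 - p)%:E <= P (~` B))%E.
Proof.
move=> mB PB_le; rewrite probability_setC //.
have := probability_le1 P mB; have := measure_ge0 P B.
move: PB_le; case: (P B) => [r| |] //=.
  by rewrite !lee_fin => r_le _ _; rewrite lerB.
by move=> *; rewrite addey ?leey.
Qed.

End Sampling.

Theorem lemma7 (R : realType) (dT : measure_display) (T : measurableType dT)
  (P : probability T R) (d n : nat)
  (X : T -> 'cV[R]_d) (Xs : 'I_n -> T -> 'cV[R]_d)
  (cbar A kappa delta lam : R) (vhat : T -> 'cV[R]_d) :
  (0 < d)%N -> (0 < n)%N ->
  (forall j, measurable_fun setT (fun w => X w j 0)) ->
  iid_copies P Xs X ->
  (Kx P X < +oo)%E ->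
  (forall a : R, 0 < a -> a * Num.sqrt (ln d%:R / n%:R) <= 1 ->
     (P [set w | (4 * a * fine (Kx P X) ^+ 2 * Num.sqrt (ln d%:R / n%:R)
                  < maxnorm (Sigma_n Xs w - Sigma_X P X))%R]
      <= (2 * powR d%:R (2 - cbar * a ^+ 2))%:E)%E) ->
  0 < A -> A * Num.sqrt (ln d%:R / n%:R) <= 1 ->
  0 < kappa < 1 ->
  0 < delta -> delta < lambda_min (Sigma_X P X) ->
  #|supp (vstar (Sigma_X P X))|%:R * Num.sqrt (ln d%:R / n%:R)
    <= (1 - kappa) * lambda_min (Sigma_X P X)
       / ((1 + 1) ^+ 2 * (4 * A * fine (Kx P X) ^+ 2)) ->
  l1norm (vstar (Sigma_X P X)) * (4 * A * fine (Kx P X) ^+ 2)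
    * Num.sqrt (ln d%:R / n%:R) <= lam ->
  (forall w, (exists v, feasible (Sigma_n Xs w) lam v) ->
     is_minimizer (Sigma_n Xs w) lam (vhat w)) ->
  exists E : set T, [/\ measurable E,
    ((1 - 2 * powR d%:R (2 - cbar * A ^+ 2))%:E <= P E)%E
  & forall w, E w ->
      l1norm (vhat w - vstar (Sigma_X P X))
        <= 8 * lam * #|supp (vstar (Sigma_X P X))|%:R
           / RE_kappa kappa (Sigma_X P X) #|supp (vstar (Sigma_X P X))| 1
      /\ l1norm_on (~: supp (vstar (Sigma_X P X))) (vhat w - vstar (Sigma_X P X))
         <= l1norm_on (supp (vstar (Sigma_X P X))) (vhat w - vstar (Sigma_X P X))].
Proof.
move=> d_gt0 _ _ [mXs _ _] _ dev A_gt0 A_le /andP[kappa_gt0 kappa_lt1].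
move=> delta_gt0 delta_lt s_le lam_le vh_min.
set Sig := Sigma_X P X in delta_lt s_le lam_le *.
set c := 4 * A * fine (Kx P X) ^+ 2 in s_le lam_le.
set q := Num.sqrt (ln d%:R / n%:R) in A_le s_le lam_le.
set s := #|supp (vstar Sig)| in s_le *.
have lm_gt0 : 0 < lambda_min Sig := lt_trans delta_gt0 delta_lt.
have c_ge0 : 0 <= c by rewrite /c mulr_ge0 ?sqr_ge0 // mulr_ge0 // ltW.
have t_ge0 : 0 <= c * q by rewrite mulr_ge0 ?sqrtr_ge0.
have st_le : 4 * s%:R * (c * q) <= (1 - kappa) * lambda_min Sig.
  have [c0|c_gt0] := eqVneq c 0.
    by rewrite c0 mul0r mulr0; apply: mulr_ge0; rewrite ?subr_ge0 ltW.
  have c'_gt0 : 0 < (1 + 1) ^+ 2 * c by rewrite mulr_gt0 // lt_def c_gt0.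
  apply: le_trans (_ : s%:R * q * ((1 + 1) ^+ 2 * c) <= _); last by rewrite -ler_pdivlMr.
  by rewrite (_ : 4 * s%:R * (c * q) = s%:R * q * ((1 + 1) ^+ 2 * c)) //; ring.
set Bad := [set w | c * q < maxnorm (Sigma_n Xs w - Sig)].
have mBad : measurable Bad.
  rewrite -[Bad]setTI; apply: measurable_fun_ltr => //.
  exact: measurable_maxnorm_Sigma_n.
exists (~` Bad); split; first exact: measurableC.
  exact: probability_setC_ge mBad (dev A A_gt0 A_le).
move=> w /negP; rewrite -leNgt => D_le.
apply: (dantzig_error_bound (Sn := Sigma_n Xs w) (t := c * q)) => //.
- exact: Sigma_X_sym.
- by rewrite kappa_gt0 kappa_lt1.
- by rewrite mulrA.
- exact: vh_min.
Qed.
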